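(* Let $X$ be a Banach space, $S$ a Hausdorff topological space, and $J\colon X\to C^{b}(S)$ a linear isometry into the sup-normed space of bounded continuous scalar-valued functions on $S$. For $s\in S$ let $\delta_s$ be the evaluation functional $f\mapsto f(s)$ on $C^b(S)$ and put $p_s:=J^{*}(\delta_s)\in X^{*}$. Assume that for all $s\in S$: (N1) $\|p_s\|=1$; (N2) $\operatorname{span}\{p_s\}$ is an $L$-summand in $X^{*}$, i.e. there is a projection $\Pi_s$ on $X^{*}$ with range $\operatorname{span}\{p_s\}$ such that $\|x^{*}\|=\|\Pi_s(x^{*})\|+\|x^{*}-\Pi_s(x^{*})\|$ for all $x^{*}\in X^{*}$; write $\Pi_s(x^{*})=\pi_s(x^{*})p_s$ with $\pi_s\in X^{**}$; (N3) for the equivalence relation $s\sim t$ iff $\Pi_s=\Pi_t$ (equivalently, $p_s$ and $p_t$ are linearly dependent) on $S$, none of the equivalence classes $Q_s=\{t\in S: s\sim t\}$ contains an interior point. Let $T\in L(X)$ and put $q_s:=T^{*}(p_s)\in X^{*}$. If the function $s\mapsto \pi_t(q_s)$ is continuous on $S$ for every $t\in S$, then for every $\varepsilon>0$, with $U_\varepsilon=\{s\in S:\|q_s\|>\|T\|-\varepsilon\}$, $$\sup_{s\in U_\varepsilon}\bigl(|1+\pi_s(q_s)|-(1+|\pi_s(q_s)|)\bigr)\ge 0,$$ and consequently $T$ satisfies the Daugavet equation $\|\mathrm{Id}+T\|=1+\|T\|$.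
   Context: A linear isometry $J\colon X\to C^b(S)$ satisfying (N1) and (N2) is called a nice embedding. Weakly compact operators satisfy the continuity hypothesis. *)

From mathcomp Require Import all_boot all_order all_algebra.
From mathcomp Require Import all_classical all_reals all_analysis.
From mathcomp Require Export complex.
Import Order.TTheory GRing.Theory Num.Theory.
Import numFieldNormedType.Exports.
Local Open Scope ring_scope.
Local Open Scope classical_set_scope.

Set Implicit Arguments.
Unset Strict Implicit.
Unset Printing Implicit Defensive.

Definition real_or_complex (R : realType) (K : numFieldType) : Prop :=
  K = (R : numFieldType) \/ K = (R[i] : numFieldType).

Definition is_sup (K : numFieldType) (A : set K) (c : K) : Prop :=
  ubound A c /\ lbound (ubound A) c.

Definition is_dual (K : numFieldType) (X : normedModType K) (f : X -> K) : Prop :=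
  (forall (a : K) (x y : X), f (a *: x + y) = a * f x + f y) /\ continuous f.

Definition dnorm_is (K : numFieldType) (X : normedModType K) (f : X -> K) (c : K) : Prop :=
  is_sup [set `|f x| | x in [set x : X | `|x| <= 1]] c.

Definition opnorm_is (K : numFieldType) (X : normedModType K) (T : X -> X) (c : K) : Prop :=
  is_sup [set `|T x| | x in [set x : X | `|x| <= 1]] c.

Definition lin_isometry_Cb (K : numFieldType) (X : normedModType K)
  (S : topologicalType) (J : X -> S -> K) : Prop :=
  (forall (a : K) (x y : X) (s : S), J (a *: x + y) s = a * J x s + J y s) /\
  (forall x : X, continuous (J x)) /\
  (forall x : X, is_sup [set `|J x s| | s in [set: S]] `|x|).

From mathcomp Require Import all_boot all_order all_algebra.
From mathcomp Require Import all_classical all_reals all_analysis.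
From mathcomp Require Import complex.
From mathcomp Require Import ring.
Import Order.TTheory GRing.Theory Num.Theory.
Import numFieldNormedType.Exports.
Local Open Scope ring_scope.
Local Open Scope classical_set_scope.
Set Implicit Arguments.
Unset Strict Implicit.
Unset Printing Implicit Defensive.

(* If [pi t (p s) <> 0] then [s ~ t], because rank-one L-projections commute.
   Along a list of pairwise inequivalent points the L-decompositions
   [f = pi t f * p t + (f - pi t f * p t)] can therefore be iterated, giving
   [\sum_t |pi t f| <= |f|].  Were [|pi s (q s)|] bounded below by [k > 0] on
   the open set [U_eps], nowhere density of the classes and continuity of
   [s |-> pi t (q s)] would yield arbitrarily long such lists [t_1, ..., t_n]
   with [|pi t_i (q w)| > k] at a common point [w], against
   [n k <= |q w| <= |T|].  So [pi s (q s)] is small somewhere on [U_eps], where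
   [|1 + pi s (q s)| - (1 + |pi s (q s)|)] is then almost nonnegative; since
   [p s + q s] and [q s] share their L-complement along [p s], this gives
   [|Id + T| >= |p s + q s| >= 1 + |T| - eps]. *)

Section Suprema.
Variable K : numFieldType.
Implicit Types (A : set K) (a c e M : K).

Lemma is_sup_ub A c a : is_sup A c -> A a -> a <= c.
Proof. by case=> + _; apply. Qed.

Lemma is_sup_least A c M : is_sup A c -> (forall a, A a -> a <= M) -> c <= M.
Proof. by case=> _ + HM; apply. Qed.

Lemma is_sup_unique A c d : is_sup A c -> is_sup A d -> c = d.
Proof.
move=> Hc Hd; apply/le_anti/andP; split.
  by apply: (is_sup_least Hc) => a /(is_sup_ub Hd).
by apply: (is_sup_least Hd) => a /(is_sup_ub Hc).
Qed.

Lemma is_sup_norm_approx (T : Type) (V : normedModType K) (f : T -> V)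
    (D : set T) c e :
  is_sup [set `|f x| | x in D] c -> 0 <= c -> 0 < e ->
  exists2 x, D x & c - e < `|f x|.
Proof.
move=> Dc c_ge0 e_gt0; apply: contrapT => nox.
suff : c <= c - e by rewrite lerBrDr gerDl (lt_geF e_gt0).
apply: (is_sup_least Dc) => _ [x Dx <-].
rewrite real_leNgt ?rpredB ?normr_real ?ger0_real ?(ltW e_gt0) //.
by apply/negP => lt_x; apply: nox; exists x.
Qed.

End Suprema.

Definition nonneg_sup_complete (K : numFieldType) := forall A : set K,
  A !=set0 -> (forall a, A a -> 0 <= a) -> (exists M, forall a, A a -> a <= M) ->
  exists c, is_sup A c.

Definition nonneg_archimedean (K : numFieldType) :=
  forall x : K, 0 <= x -> exists n : nat, x < n%:R.

Section RealOrComplex.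
Variables (R : realType) (K : numFieldType).
Hypothesis hK : real_or_complex R K.

Lemma real_or_complex_sup_complete : nonneg_sup_complete K.
Proof.
case: hK => -> A [a0 Aa0] A_ge0 [M AM].
  have supA : has_sup A by split; [exists a0 | exists M].
  exists (sup A); split; first by move=> a; apply: sup_upper_bound.
  by move=> w Aw; apply: ge_sup => //; exists a0.
have ImA a : A a -> complex.Im a = 0.
  by move=> /A_ge0; rewrite lecE => /andP[/eqP -> _].
pose ReA := [set complex.Re a | a in A].
have supReA : has_sup ReA.
  split; first by exists (complex.Re a0), a0.
  by exists (complex.Re M) => _ [a Aa <-]; move: (AM a Aa); rewrite lecE => /andP[].
exists (Complex (sup ReA) 0); split.
  move=> a Aa; rewrite lecE /= ImA // eqxx /=.
  by apply: sup_upper_bound => //; exists a.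
move=> w Aw; move: (Aw _ Aa0); rewrite !lecE /= (ImA a0 Aa0) => /andP[/eqP -> _].
rewrite eqxx /=; apply: ge_sup; first by exists (complex.Re a0), a0.
by move=> _ [a Aa <-]; move: (Aw a Aa); rewrite lecE => /andP[].
Qed.

Lemma real_or_complex_archimedean : nonneg_archimedean K.
Proof.
case: hK => -> x; first by exists (Num.Def.archi_bound x); apply: archi_boundP.
rewrite lecE => /andP[/eqP Imx Rex]; exists (Num.Def.archi_bound (complex.Re x)).
have -> : x = real_complex R (complex.Re x) by case: x Imx Rex => a b /= ->.
by rewrite -(rmorph_nat (real_complex R)) ltcR; apply: archi_boundP.
Qed.

End RealOrComplex.

Section DualFunctionals.
Variables (K : numFieldType) (X : normedModType K).
Implicit Types (f g : X -> K) (a M : K) (x y : X).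

Definition linear_functional f := forall a x y, f (a *: x + y) = a * f x + f y.

Lemma linear_functional0 f : linear_functional f -> f 0 = 0.
Proof.
move=> lf; have := lf 1 0 0; rewrite scale1r addr0 mul1r => f00.
by apply: (@addrI _ (f 0)); rewrite addr0.
Qed.

Lemma linear_functionalZ f a x : linear_functional f -> f (a *: x) = a * f x.
Proof. by move=> lf; rewrite -[a *: x]addr0 lf linear_functional0 ?addr0. Qed.

Lemma linear_functionalB f x y : linear_functional f -> f (x - y) = f x - f y.
Proof. by move=> lf; rewrite addrC -scaleN1r lf mulN1r addrC. Qed.

Lemma bounded_linear_is_dual f M : linear_functional f -> 0 < M ->
  (forall x, `|f x| <= M * `|x|) -> is_dual f.
Proof.
move=> lf M_gt0 fM; split => // x; apply/cvgrPdist_lt => e e_gt0.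
near=> y; rewrite -linear_functionalB //; apply: le_lt_trans (fM _) _.
rewrite mulrC -ltr_pdivlMr //; near: y.
by apply: cvgr_dist_lt => //; rewrite divr_gt0.
Unshelve. all: by end_near.
Qed.

Lemma is_dual_bounded f : is_dual f -> exists2 M, 0 < M & forall x, `|f x| <= M * `|x|.
Proof.
case=> lf fc; have f0 := linear_functional0 lf.
have [d /= d_gt0 fd] := (nbhs_ballP _ _).1 ((cvgrPdist_lt _ _).1 (fc 0) 1 ltr01).
exists (2 / d) => [|x]; first by rewrite divr_gt0.
have [->|x0] := eqVneq x 0; first by rewrite f0 !normr0 mulr0.
have nx_gt0 : 0 < `|x| by rewrite normr_gt0.
pose c := d / (2 * `|x|).
have c_gt0 : 0 < c by rewrite divr_gt0 // mulr_gt0.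
have : ball 0 d (c *: x).
  rewrite -ball_normE /= sub0r normrN normrZ gtr0_norm // /c invfM -mulrA.
  by rewrite divfK ?gt_eqF // gtr_pMr // invf_lt1 // ltr1n.
move=> /fd; rewrite f0 sub0r normrN linear_functionalZ // normrM gtr0_norm //.
rewrite -ltr_pdivlMl // => /ltW.
by rewrite /c invf_div mulr1 mulrAC.
Unshelve. all: by end_near.
Qed.

Lemma is_dual_comb a f g : is_dual f -> is_dual g -> is_dual (fun x => a * f x + g x).
Proof.
move=> [lf fc] [lg gc]; split; first by move=> b x y; rewrite lf lg; ring.
by move=> x; exact: (continuousD (continuousM (@cst_continuous _ _ a x) (fc x)) (gc x)).
Qed.

Lemma is_dual0 : is_dual (fun _ : X => 0 : K).
Proof.
by apply: (@bounded_linear_is_dual _ 1) => // [a x y|x]; rewrite ?mulr0 ?addr0 ?normr0 ?mul1r.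
Qed.

Lemma is_dualZ a f : is_dual f -> is_dual (fun x => a * f x).
Proof.
move=> df; have := is_dual_comb a df is_dual0.
by under eq_fun do rewrite addr0.
Qed.

Lemma is_dualD f g : is_dual f -> is_dual g -> is_dual (fun x => f x + g x).
Proof.
move=> df dg; have := is_dual_comb 1 df dg.
by under eq_fun do rewrite mul1r.
Qed.

Lemma is_dualB f g : is_dual f -> is_dual g -> is_dual (fun x => f x - g x).
Proof.
move=> df dg; have := is_dual_comb (-1) dg df.
by under eq_fun do rewrite mulN1r addrC.
Qed.

End DualFunctionals.

Lemma sup_unit_ball_homogeneous (K : numFieldType) (X : normedModType K)
    (h : X -> K) c : (forall a x, h (a *: x) = `|a| * h x) ->
  is_sup [set h x | x in [set x | `|x| <= 1]] c -> forall x, h x <= c * `|x|.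
Proof.
move=> hZ hc x; have [->|x0] := eqVneq x 0.
  by rewrite normr0 mulr0 -(scale0r 0) hZ normr0 mul0r.
have nx_gt0 : 0 < `|x| by rewrite normr_gt0.
have : h (`|x|^-1 *: x) <= c.
  apply: (is_sup_ub hc); exists (`|x|^-1 *: x) => //=.
  by rewrite normrZ normfV normr_id mulVf ?gt_eqF.
by rewrite hZ normfV normr_id ler_pdivrMl // mulrC.
Qed.

Section DualNorm.
Variables (K : numFieldType) (X : normedModType K).
Hypothesis supK : nonneg_sup_complete K.
Implicit Types (f g : X -> K) (a c e M : K) (x : X).

Definition dual_norm f : K := xget 0 [set c | dnorm_is f c].

Lemma dual_normP f : is_dual f -> dnorm_is f (dual_norm f).
Proof.
move=> df; apply: xgetPex; apply: supK.
- by exists `|f 0|, 0 => //=; rewrite normr0.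
- by move=> _ [x _ <-].
- have [M M_gt0 fM] := is_dual_bounded df.
  by exists M => _ [x /= x1 <-]; apply: le_trans (fM x) _; rewrite ler_piMr // ltW.
Qed.

Lemma dual_norm_eq f c : is_dual f -> dnorm_is f c -> dual_norm f = c.
Proof. by move=> df; apply: is_sup_unique (dual_normP df). Qed.

Lemma dual_norm_ub f x : is_dual f -> `|x| <= 1 -> `|f x| <= dual_norm f.
Proof. by move=> df x1; apply: (is_sup_ub (dual_normP df)); exists x. Qed.

Lemma dual_norm_le f x : is_dual f -> `|f x| <= dual_norm f * `|x|.
Proof.
move=> df; apply: (sup_unit_ball_homogeneous _ (dual_normP df)) => a y.
by rewrite linear_functionalZ ?normrM //; case: df.
Qed.

Lemma dual_norm_least f M : is_dual f ->
  (forall x, `|x| <= 1 -> `|f x| <= M) -> dual_norm f <= M.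
Proof. by move=> df fM; apply: (is_sup_least (dual_normP df)) => _ [x /fM ? <-]. Qed.

Lemma dual_norm_ge0 f : is_dual f -> 0 <= dual_norm f.
Proof.
by move=> df; apply: le_trans (normr_ge0 (f 0)) (dual_norm_ub df _); rewrite normr0.
Qed.

Lemma dual_norm_approx f e : is_dual f -> 0 < e ->
  exists2 x, `|x| <= 1 & dual_norm f - e < `|f x|.
Proof.
by move=> df; apply: (is_sup_norm_approx (dual_normP df)); apply: dual_norm_ge0.
Qed.

Lemma dual_norm_le0 f : is_dual f -> dual_norm f <= 0 -> forall x, f x = 0.
Proof.
move=> df f0 x; apply/eqP; rewrite -normr_le0.
by apply: le_trans (dual_norm_le x df) _; rewrite mulr_le0_ge0.
Qed.

Lemma dual_normD f g : is_dual f -> is_dual g ->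
  dual_norm (fun x => f x + g x) <= dual_norm f + dual_norm g.
Proof.
move=> df dg; apply: dual_norm_least; first exact: is_dualD.
by move=> x x1; apply: le_trans (ler_normD _ _) _; apply: lerD; apply: dual_norm_ub.
Qed.

Lemma dual_normZ f a : is_dual f -> dual_norm (fun x => a * f x) = `|a| * dual_norm f.
Proof.
move=> df; have daf := is_dualZ a df; apply/le_anti/andP; split.
  apply: dual_norm_least => // x x1.
  by rewrite normrM ler_wpM2l // dual_norm_ub.
have [->|a0] := eqVneq a 0; first by rewrite normr0 mul0r dual_norm_ge0 //; apply: is_dualZ.
have na_gt0 : 0 < `|a| by rewrite normr_gt0.
rewrite -ler_pdivlMl //; apply: dual_norm_least => // x x1.
by rewrite ler_pdivlMl // -normrM dual_norm_ub.
Qed.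

End DualNorm.

Section LProjections.
Variables (K : numFieldType) (X : normedModType K).
Hypothesis supK : nonneg_sup_complete K.
Implicit Types (f g y : X -> K) (A B : (X -> K) -> X -> K).

Definition compl_proj A f := fun x => f x - A f x.

Definition L_projection A :=
  [/\ forall f, is_dual f -> is_dual (A f),
      forall f g, is_dual f -> is_dual g ->
        A (fun x => f x - g x) = (fun x => A f x - A g x) &
      forall f, is_dual f -> dual_norm f = dual_norm (A f) + dual_norm (compl_proj A f)].

Lemma L_projection_compl A : L_projection A -> L_projection (compl_proj A).
Proof.
case=> Adual AB AL; split.
- by move=> f df; apply: is_dualB => //; apply: Adual.
- by move=> f g df dg; rewrite /compl_proj AB //; apply: funext => x; ring.
- move=> f df; rewrite /compl_proj addrC.
  by under eq_fun do rewrite opprB addrC subrK; apply: AL.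
Qed.

(* With [z = B y], splitting [y = z + (y - z)] further along [A] gives
   [|y| = |A z| + |y - A z| + |z - A z| + ...], while the triangle inequality
   gives [|y| <= |A z| + |y - A z|]: the term [|z - A z|] must vanish. *)
Lemma L_projection_range_stable A B y : L_projection A -> L_projection B ->
  is_dual y -> A y = y -> A (B y) = B y.
Proof.
move=> [Adual AB AL] [Bdual _ BL] dy Ay; set z := B y.
have dz : is_dual z by apply: Bdual.
have dAz := Adual _ dz.
have dyAz : is_dual (fun x => y x - A z x) by apply: is_dualB.
have dzAz : is_dual (fun x => z x - A z x) by apply: is_dualB.
have Ly : dual_norm y = (dual_norm (A z) + dual_norm (fun x => y x - A z x))
  + (dual_norm (fun x => z x - A z x)
     + dual_norm (fun x => y x - z x - (y x - A z x))).
  rewrite (BL _ dy) -/z (AL _ dz) (AL _ (is_dualB dy dz)) /compl_proj AB // Ay; ring.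
have y_le : dual_norm y <= dual_norm (A z) + dual_norm (fun x => y x - A z x) + 0.
  have := dual_normD supK dAz dyAz; rewrite addr0.
  by under eq_fun do rewrite addrC subrK.
have r_ge0 : 0 <= dual_norm (fun x => y x - z x - (y x - A z x)).
  by apply: dual_norm_ge0 => //; do 2 apply: is_dualB => //.
have zAz0 : dual_norm (fun x => z x - A z x) <= 0.
  by move: y_le; rewrite Ly lerD2l; apply: le_trans; rewrite lerDl.
apply: funext => x; apply/eqP; rewrite eq_sym -subr_eq0; apply/eqP.
exact: dual_norm_le0 dzAz zAz0 x.
Qed.

Lemma L_projection_comm A B f : L_projection A -> L_projection B ->
  (forall g, is_dual g -> A (A g) = A g) -> is_dual f -> B (A f) = A (B f).
Proof.
move=> LA LB Aid df; have [Adual AB _] := LA; have [Bdual BB _] := LB.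
have h1 := L_projection_range_stable LA LB (Adual _ df) (Aid _ df).
have LA' := L_projection_compl LA.
have A'id : compl_proj A (compl_proj A f) = compl_proj A f.
  by rewrite /compl_proj AB ?Aid //; [apply: funext => x; ring | apply: Adual].
have dAf := Adual _ df; have dBf := Bdual _ df; have dBAf := Bdual _ dAf.
have := L_projection_range_stable LA' LB (is_dualB df dAf) A'id.
rewrite /compl_proj BB // AB // => h2.
apply: funext => x; have := congr1 (fun h => h x) h2; rewrite /= h1 => /eqP.
by rewrite -[X in _ == X]addr0 (inj_eq (addrI _)) oppr_eq0 subr_eq0 => /eqP.
Qed.

End LProjections.

Lemma open_norm_gt (K : numFieldType) (T : topologicalType) (g : T -> K) c :
  continuous g -> open [set s | c < `|g s|].
Proof.
move=> gc; rewrite openE => s /= cgs.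
have e_gt0 : 0 < `|g s| - c by rewrite subr_gt0.
apply: filterS ((cvgrPdist_lt _ _).1 (gc s) _ e_gt0) => t /= gst.
have := le_lt_trans (lerB_normD (g s) (- g t)) gst.
by rewrite normrN ltrD2l ltrN2.
Qed.

Lemma interior_eq0_notin (T : topologicalType) (A V : set T) s :
  interior A = set0 -> open V -> V s -> exists2 t, V t & ~ A t.
Proof.
move=> A0 oV Vs; apply: contrapT => VA.
have : interior A s.
  apply: filterS (open_nbhs_nbhs (conj oV Vs)) => t Vt.
  by apply: contrapT => nAt; apply: VA; exists t.
by rewrite A0.
Qed.

Section RankOneLProjections.
Variables (K : numFieldType) (X : normedModType K) (S : topologicalType).
Hypothesis supK : nonneg_sup_complete K.
Variables (p : S -> X -> K) (pi : S -> (X -> K) -> K).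
Hypothesis p_dual : forall s, is_dual (p s).
Hypothesis p_norm1 : forall s, dnorm_is (p s) 1.
Hypothesis pi_lin : forall s a f g, is_dual f -> is_dual g ->
  pi s (fun x => a * f x + g x) = a * pi s f + pi s g.
Hypothesis pi_p : forall s, pi s (p s) = 1.
Hypothesis pi_L : forall s f, is_dual f -> forall a b c : K,
  dnorm_is f a -> dnorm_is (fun x => pi s f * p s x) b ->
  dnorm_is (fun x => f x - pi s f * p s x) c -> a = b + c.
Implicit Types (s t u : S) (f g : X -> K) (a mu : K).

Definition rank_one_proj s f := fun x => pi s f * p s x.
Local Notation P := rank_one_proj.

Definition same_proj s t := forall f, is_dual f -> P s f = P t f.

Lemma pi0 s : pi s (fun=> 0) = 0.
Proof.
have := pi_lin s 1 (is_dual0 X) (is_dual0 X).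
under eq_fun do rewrite mulr0 addr0; rewrite mul1r => E.
by apply: (@addrI _ (pi s (fun=> 0))); rewrite addr0 -E.
Qed.

Lemma piZ s a f : is_dual f -> pi s (fun x => a * f x) = a * pi s f.
Proof.
move=> df; have := pi_lin s a df (is_dual0 X); rewrite pi0 addr0.
by under eq_fun do rewrite addr0.
Qed.

Lemma piB s f g : is_dual f -> is_dual g -> pi s (fun x => f x - g x) = pi s f - pi s g.
Proof.
move=> df dg; have := pi_lin s (-1) dg df; rewrite mulN1r addrC.
by under eq_fun do rewrite mulN1r addrC.
Qed.

Lemma dual_norm_p s : dual_norm (p s) = 1.
Proof. exact: dual_norm_eq. Qed.

Lemma rank_one_proj_dual s f : is_dual (P s f).
Proof. exact: is_dualZ. Qed.

Lemma rank_one_proj_id s f : is_dual f -> P s (P s f) = P s f.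
Proof. by move=> df; rewrite /P piZ // pi_p mulr1. Qed.

Lemma L_projection_rank_one s : L_projection (P s).
Proof.
split=> [f _ | f g df dg | f df]; first exact: rank_one_proj_dual.
  by rewrite /P piB //; apply: funext => x; rewrite mulrBl.
apply: (pi_L df); apply: dual_normP => //; first exact: rank_one_proj_dual.
exact: is_dualB (rank_one_proj_dual _ _).
Qed.

Lemma dual_norm_rank_one_proj s f : dual_norm (P s f) = `|pi s f|.
Proof. by rewrite dual_normZ // dual_norm_p mulr1. Qed.

Lemma rank_one_proj_comm s t f : is_dual f -> P s (P t f) = P t (P s f).
Proof.
move=> df; apply: L_projection_comm => //; try exact: L_projection_rank_one.
exact: rank_one_proj_id.
Qed.

Lemma same_proj_sym s t : same_proj s t -> same_proj t s.
Proof. by move=> st f df; rewrite st. Qed.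

Lemma p_neq0 s : exists x, p s x != 0.
Proof.
have [x _] := dual_norm_approx supK (p_dual s) ltr01.
by rewrite dual_norm_p subrr normr_gt0; exists x.
Qed.

Lemma same_proj_of_proportional s t mu :
  (forall x, p s x = mu * p t x) -> same_proj s t.
Proof.
move=> ps_mu; have mu0 : mu != 0.
  by have [x] := p_neq0 s; apply: contraNneq => mu0; rewrite ps_mu mu0 mul0r.
have ps : p s = (fun x => mu * p t x) by apply: funext.
have pt : p t = (fun x => mu^-1 * p s x).
  by apply: funext => x; rewrite ps_mu mulKf.
move=> f df.
have Pts : P t (P s f) = P s f.
  by rewrite /P piZ // {1}ps piZ // pi_p mulr1; apply: funext => x; rewrite ps_mu mulrA.
have Pst : P s (P t f) = P t f.
  by rewrite /P piZ // {1}pt piZ // pi_p mulr1; apply: funext => x; rewrite pt mulrA.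
by rewrite -Pts -rank_one_proj_comm // Pst.
Qed.

Lemma same_proj_of_pi_neq0 s t : pi t (p s) != 0 -> same_proj s t.
Proof.
move=> pi_ts0; apply/same_proj_sym/(same_proj_of_proportional (mu := pi s (p t))) => x.
have := congr1 (fun h => h x) (rank_one_proj_comm t s (p_dual s)).
by rewrite /P pi_p !(piZ _ _ (p_dual _)) mul1r -mulrA => /mulfI; apply.
Qed.

Lemma proportional_of_same_proj s t : same_proj t s -> forall x, p s x = pi t (p s) * p t x.
Proof.
move=> ts x; have := congr1 (fun h => h x) (ts _ (p_dual s)).
by rewrite /P /= pi_p mul1r.
Qed.

(* Consecutive L-decompositions: removing [P t f] does not change [pi u f]
   for the later [u], since [pi u (p t) = 0]. *)
Lemma sum_pi_le_dual_norm (ts : seq S) f :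
  pairwise (fun t u => pi u (p t) == 0) ts -> is_dual f ->
  \sum_(t <- ts) `|pi t f| <= dual_norm f.
Proof.
elim: ts f => [|t ts IH] f; first by rewrite big_nil => _; apply: dual_norm_ge0.
rewrite pairwise_cons big_cons => /andP[/allP orth_t orth_ts] df.
have [_ _ Lt] := L_projection_rank_one t.
rewrite (Lt f df) dual_norm_rank_one_proj lerD2l.
have dg := is_dualB df (rank_one_proj_dual t f).
suff -> : \sum_(u <- ts) `|pi u f| = \sum_(u <- ts) `|pi u (fun x => f x - P t f x)|.
  exact: IH.
apply: eq_big_seq => u /orth_t /eqP pi_ut.
by rewrite (piB _ df (rank_one_proj_dual t f)) /P piZ // pi_ut mulr0 subr0.
Qed.

Hypothesis p_cont : forall x, continuous (fun s => p s x).

Lemma same_proj_class_separated t s0 : ~ same_proj t s0 -> exists D : S -> K,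
  [/\ continuous D, D s0 != 0 & forall s, same_proj t s -> D s = 0].
Proof.
move=> nts0; have [x2 ptx2] := p_neq0 t.
pose mu := p s0 x2 / p t x2.
have [x1 ps0x1] : exists x1, p s0 x1 != mu * p t x1.
  apply: contrapT => all_eq; apply/nts0/same_proj_sym/(same_proj_of_proportional (mu := mu)).
  by move=> x; apply/eqP; apply: contrapT => neq; apply: all_eq; exists x; apply/negP.
exists (fun s => p s x1 * p t x2 - p s x2 * p t x1); split.
- move=> s; exact: (continuousB
    (continuousM (@p_cont x1 s) (@cst_continuous _ _ (p t x2) s))
    (continuousM (@p_cont x2 s) (@cst_continuous _ _ (p t x1) s))).
- apply: contraNneq ps0x1 => /eqP; rewrite subr_eq0 => /eqP E.
  by rewrite /mu mulrAC -E mulfK.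
- by move=> s ts; rewrite !(proportional_of_same_proj ts); ring.
Qed.

Section DiagonalEstimate.
Hypothesis archK : nonneg_archimedean K.
Hypothesis same_proj_interior : forall s, interior [set t | same_proj s t] = set0.
Variables (q : S -> X -> K) (c : K).
Hypothesis q_dual : forall s, is_dual (q s).
Hypothesis dual_norm_q_le : forall s, dual_norm (q s) <= c.
Hypothesis pi_q_cont : forall t, continuous (fun s => pi t (q s)).

Let orthogonal (ts : seq S) := pairwise (fun t u => pi u (p t) == 0) ts.

(* Each step picks [w] in the current open set, then, by nowhere density of
   the class of [w], a nearby [s0] outside it, and shrinks the open set to
   a neighbourhood of [s0] avoiding the class of [w]. *)
Lemma orthogonal_chain (U : set S) k n : open U -> U !=set0 ->
  (forall s, U s -> k < `|pi s (q s)|) ->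
  exists ts : seq S, [/\ size ts = n, orthogonal ts &
    exists2 W : set S, open W /\ W !=set0 & forall s, W s ->
      [/\ U s, all (fun t => k < `|pi t (q s)|) ts &
          forall t, t \in ts -> ~ same_proj t s]].
Proof.
move=> oU U0 Uk; elim: n => [|n [ts [size_ts orth_ts [W [oW [w Ww]] HW]]]].
  by exists [::]; split=> //; exists U.
have [Uw _ nEw] := HW w Ww.
pose V := W `&` [set s | k < `|pi w (q s)|].
have oV : open V by apply: openI => //; apply: open_norm_gt.
have [s0 Vs0 nE0] := interior_eq0_notin (same_proj_interior w) oV (conj Ww (Uk w Uw)).
have [D [Dc D0 DE]] := same_proj_class_separated nE0.
exists (w :: ts); split; first by rewrite /= size_ts.
  rewrite /orthogonal pairwise_cons; apply/andP; split => //; apply/allP => u u_ts.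
  by apply/negPn/negP => /same_proj_of_pi_neq0 /same_proj_sym; apply: nEw.
exists (V `&` [set s | 0 < `|D s|]).
  split; first by apply: openI => //; apply: open_norm_gt.
  by exists s0; split => //=; rewrite normr_gt0.
move=> s [[Ws kws] Ds]; have [Us kts nEs] := HW s Ws.
split=> //=; first by rewrite kws.
move=> t; rewrite inE => /orP[/eqP -> | /nEs //] Ews.
by move: Ds; rewrite /= DE // normr0 ltxx.
Qed.

Lemma pi_q_small_somewhere (U : set S) k : open U -> U !=set0 -> 0 < k ->
  exists2 s, U s & `|pi s (q s)| <= k.
Proof.
move=> oU [s1 Us1] k_gt0; apply: contrapT => noU.
have Uk s : U s -> k < `|pi s (q s)|.
  move=> Us; rewrite real_ltNge ?normr_real ?gtr0_real //.
  by apply/negP => small; apply: noU; exists s.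
have c_ge0 : 0 <= c := le_trans (dual_norm_ge0 supK (q_dual s1)) (dual_norm_q_le s1).
have [N cN] := archK (divr_ge0 c_ge0 (ltW k_gt0)).
have [ts [size_ts orth_ts [W [_ [w Ww]] HW]]] := orthogonal_chain N oU (ex_intro _ s1 Us1) Uk.
have [_ kts _] := HW w Ww.
have : k *+ N <= c.
  apply: le_trans (le_trans (sum_pi_le_dual_norm orth_ts (q_dual w)) (dual_norm_q_le w)).
  rewrite -size_ts -iter_addr_0 -count_predT -big_const_seq big_seq [leRHS]big_seq.
  by apply: ler_sum => t /(allP kts) /ltW.
by rewrite -mulr_natl -ler_pdivlMr // (lt_geF cN).
Qed.

End DiagonalEstimate.

End RankOneLProjections.

Lemma normD1_sub_ge (K : numDomainType) (z : K) :
  - (`|z| + `|z|) <= `|1 + z| - (1 + `|z|).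
Proof.
have := lerB_normD 1 z; rewrite normr1 => h.
by rewrite (_ : - _ = 1 - `|z| - (1 + `|z|)) ?lerD2r //; ring.
Qed.

Section NiceEmbedding.
Variables (K : numFieldType) (X : normedModType K) (S : topologicalType).
Hypothesis supK : nonneg_sup_complete K.
Variables (J : X -> S -> K) (p : S -> X -> K).
Hypothesis hJ : lin_isometry_Cb J.
Hypothesis hp : forall s x, p s x = J x s.

Lemma isometry_Cb_le x s : `|J x s| <= `|x|.
Proof. by case: hJ => _ [_ Jiso]; apply: (is_sup_ub (Jiso x)); exists s. Qed.

Lemma evaluation_dual s : is_dual (p s).
Proof.
apply: (@bounded_linear_is_dual _ _ _ 1) => // [a x y|x].
  by rewrite !hp; case: hJ => ->.
by rewrite mul1r hp isometry_Cb_le.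
Qed.

Lemma evaluation_cont x : continuous (fun s => p s x).
Proof. by case: hJ => _ [Jc _]; under eq_fun do rewrite hp; apply: Jc. Qed.

Variables (T : X -> X) (q : S -> X -> K) (nT : K).
Hypothesis T_lin : forall a x y, T (a *: x + y) = a *: T x + T y.
Hypothesis T_cont : continuous T.
Hypothesis hq : forall s x, q s x = p s (T x).
Hypothesis hnT : opnorm_is T nT.

Lemma opnorm_ge0 : 0 <= nT.
Proof.
apply: le_trans (normr_ge0 (T 0)) (is_sup_ub hnT _).
by exists 0 => //=; rewrite normr0.
Qed.

Lemma opnorm_le x : `|T x| <= nT * `|x|.
Proof.
have T0 : T 0 = 0.
  have := T_lin 1 0 0; rewrite scale1r !addr0 scale1r => E.
  by apply: (@addrI _ (T 0)); rewrite addr0 -E.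
apply: (sup_unit_ball_homogeneous (h := fun x => `|T x|)) hnT x => a y.
by rewrite -[a *: y]addr0 T_lin T0 !addr0 normrZ.
Qed.

Lemma adjoint_evaluation_dual s : is_dual (q s).
Proof.
have [p_lin p_cont] := evaluation_dual s.
have -> : q s = p s \o T by apply: funext => x; rewrite hq.
split=> [a x y|x]; first by rewrite /= T_lin p_lin.
apply: continuous_comp; [exact: T_cont | exact: p_cont].
Qed.

Lemma dual_norm_adjoint_le s : dual_norm (q s) <= nT.
Proof.
apply: (dual_norm_least supK) => [|x x1]; first exact: adjoint_evaluation_dual.
rewrite hq hp; apply: le_trans (isometry_Cb_le _ _) _.
by apply: le_trans (opnorm_le x) _; rewrite ler_piMr ?opnorm_ge0.
Qed.

Lemma open_norming_set eps : open [set s | nT - eps < dual_norm (q s)].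
Proof.
rewrite openE => s /= qs_gt.
have gap : 0 < dual_norm (q s) - (nT - eps) by rewrite subr_gt0.
have [x x1] := dual_norm_approx supK (adjoint_evaluation_dual s) gap.
rewrite subKr => qsx.
have qx_cont : continuous (fun t => q t x).
  by under eq_fun do rewrite hq; apply: evaluation_cont.
apply: filterS (open_nbhs_nbhs (conj (open_norm_gt (nT - eps) qx_cont) qsx)).
move=> t /= qtx.
exact: lt_le_trans qtx (dual_norm_ub supK (adjoint_evaluation_dual t) x1).
Qed.

Lemma norming_set_neq0 eps : 0 < eps -> [set s | nT - eps < dual_norm (q s)] !=set0.
Proof.
move=> eps_gt0; have [x x1] := is_sup_norm_approx hnT opnorm_ge0 eps_gt0.
rewrite -subr_gt0 => gap; have [_ [_ Jiso]] := hJ.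
have [s _] := is_sup_norm_approx (Jiso (T x)) (normr_ge0 _) gap.
rewrite subKr -hp -hq => qsx; exists s => /=.
exact: lt_le_trans qsx (dual_norm_ub supK (adjoint_evaluation_dual s) x1).
Qed.

Variable pi : S -> (X -> K) -> K.
Hypothesis N1 : forall s, dnorm_is (p s) 1.
Hypothesis pi_lin : forall s a f g, is_dual f -> is_dual g ->
  pi s (fun x => a * f x + g x) = a * pi s f + pi s g.
Hypothesis pi_p : forall s, pi s (p s) = 1.
Hypothesis N2 : forall s f, is_dual f -> forall a b c : K,
  dnorm_is f a -> dnorm_is (fun x => pi s f * p s x) b ->
  dnorm_is (fun x => f x - pi s f * p s x) c -> a = b + c.

Local Notation defect s := (`|1 + pi s (q s)| - (1 + `|pi s (q s)|)).

(* [p s + q s] and [q s] have the same L-complement with respect to [p s]. *)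
Lemma dual_norm_evaluation_add s :
  dual_norm (fun x => p s x + q s x) = 1 + dual_norm (q s) + defect s.
Proof.
have dp := evaluation_dual s; have dq := adjoint_evaluation_dual s.
have pi_pq : pi s (fun x => p s x + q s x) = 1 + pi s (q s).
  by have := pi_lin s 1 dp dq; rewrite mul1r pi_p; under eq_fun do rewrite mul1r.
have [_ _ Ls] := L_projection_rank_one supK evaluation_dual pi_lin N2 s.
rewrite (Ls _ (is_dualD dp dq)) (Ls _ dq).
rewrite !(dual_norm_rank_one_proj supK pi evaluation_dual N1) pi_pq.
have -> : compl_proj (rank_one_proj p pi s) (fun x => p s x + q s x)
    = compl_proj (rank_one_proj p pi s) (q s).
  by apply: funext => x; rewrite /compl_proj /rank_one_proj pi_pq; ring.
ring.
Qed.

Lemma daugavet_of_defect :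
  (forall e, 0 < e -> exists s, nT - e < dual_norm (q s) /\ - e < defect s) ->
  opnorm_is (fun x => x + T x) (1 + nT).
Proof.
move=> near_defect; split.
  move=> _ [x x1 <-]; apply: le_trans (ler_normD _ _) _; apply: lerD => //.
  by apply: le_trans (opnorm_le x) _; rewrite ler_piMr ?opnorm_ge0.
move=> w w_ub; apply/ler_addgt0Pr => e e_gt0.
have [s [qs_gt defect_gt]] :
    exists s, nT - e / 2 < dual_norm (q s) /\ - (e / 2) < defect s.
  by apply: near_defect; rewrite divr_gt0.
have g_le : dual_norm (fun x => p s x + q s x) <= w.
  apply: (dual_norm_least supK) => [|x x1].
    exact: is_dualD (evaluation_dual s) (adjoint_evaluation_dual s).
  have [Jlin _] := hJ; rewrite hq !hp -[J x s]mul1r -Jlin scale1r.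
  by apply: le_trans (isometry_Cb_le _ _) (w_ub _ _); exists x.
rewrite -lerBlDr; apply: le_trans g_le; rewrite dual_norm_evaluation_add.
rewrite -!addrA lerD2l ltW // {1}(splitr e) opprD addrA.
exact: ltrD qs_gt defect_gt.
Qed.

Hypothesis archK : nonneg_archimedean K.
Hypothesis N3 : forall s, interior [set t | same_proj p pi s t] = set0.
Hypothesis hcont : forall t, continuous (fun s => pi t (q s)).

Lemma defect_sup eps delta : 0 < eps -> 0 < delta ->
  exists s, nT - eps < dual_norm (q s) /\ - delta < defect s.
Proof.
move=> eps_gt0 delta_gt0; have k_gt0 : 0 < delta / 2 / 2 by rewrite !divr_gt0.
have [s qs_gt small] := pi_q_small_somewhere supK evaluation_dual N1 pi_lin pi_p N2
  evaluation_cont archK N3 adjoint_evaluation_dual dual_norm_adjoint_le hcont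
  (open_norming_set eps) (norming_set_neq0 eps_gt0) k_gt0.
exists s; split=> //; apply: lt_le_trans (normD1_sub_ge _).
rewrite ltrN2; apply: le_lt_trans (lerD small small) _.
by rewrite -splitr ltr_pdivrMr // ltr_pMr // ltr1n.
Qed.

End NiceEmbedding.

Theorem lemma2p4 (R : realType) (K : numFieldType) (hK : real_or_complex R K)
  (X : completeNormedModType K) (S : topologicalType) (hS : hausdorff_space S)
  (J : X -> S -> K) (hJ : lin_isometry_Cb J)
  (* p_s = J^*(delta_s) *)
  (p : S -> X -> K) (hp : forall s x, p s x = J x s)
  (* N1 *)
  (N1 : forall s, dnorm_is (p s) 1)
  (* N2: Pi_s(x^* ) = pi_s(x^* ) p_s is an L-projection onto span{p_s} *)
  (pi : S -> (X -> K) -> K)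
  (pi_lin : forall s (a : K) (f g : X -> K), is_dual f -> is_dual g ->
     pi s (fun x => a * f x + g x) = a * pi s f + pi s g)
  (pi_p : forall s, pi s (p s) = 1)
  (N2 : forall s (f : X -> K), is_dual f -> forall a b c : K,
     dnorm_is f a -> dnorm_is (fun x => pi s f * p s x) b ->
     dnorm_is (fun x => f x - pi s f * p s x) c -> a = b + c)
  (* N3: the classes of s ~ t iff Pi_s = Pi_t have empty interior *)
  (N3 : forall s : S, interior [set t : S | forall f : X -> K, is_dual f ->
          (fun x => pi s f * p s x) = (fun x => pi t f * p t x)] = set0)
  (* T in L(X), q_s = T^*(p_s) *)
  (T : X -> X) (T_lin : forall (a : K) (x y : X), T (a *: x + y) = a *: T x + T y)
  (T_cont : continuous T)
  (q : S -> X -> K) (hq : forall s x, q s x = p s (T x))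
  (nT : K) (hnT : opnorm_is T nT)
  (nq : S -> K) (hnq : forall s, dnorm_is (q s) (nq s))
  (hcont : forall t : S, continuous (fun s : S => pi t (q s))) :
  (forall eps : K, 0 < eps ->
     (* sup_{s in U_eps} (|1 + pi_s(q_s)| - (1 + |pi_s(q_s)|)) >= 0 *)
     forall delta : K, 0 < delta ->
       exists s : S, nT - eps < nq s /\
         - delta < `|1 + pi s (q s)| - (1 + `|pi s (q s)|)) /\
  opnorm_is (fun x => x + T x) (1 + nT).
Proof.
have supK := real_or_complex_sup_complete hK.
have near_defect := defect_sup supK hJ hp T_lin T_cont hq hnT N1 pi_lin pi_p N2
  (real_or_complex_archimedean hK) N3 hcont.
have nqE s : dual_norm (q s) = nq s.
  apply: (dual_norm_eq supK) (hnq s).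
  exact: (adjoint_evaluation_dual hJ hp T_lin T_cont hq s).
split=> [eps eps_gt0 delta delta_gt0|].
  by have [s] := near_defect _ _ eps_gt0 delta_gt0; rewrite nqE; exists s.
apply: (daugavet_of_defect supK hJ hp T_lin T_cont hq hnT N1 pi_lin pi_p N2).
by move=> e e_gt0; apply: near_defect.
Qed.
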